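(* Let $G$ be a finitely generated, torsion-free, $2$-step nilpotent group with Malcev basis $(A;C)=(a_1,\dots,a_n;c_1,\dots,c_m)$, $n\ge2$, $m\ge1$, and let $\lambda_t^{ij}$, $\alpha_i$, $\gamma_t$, $c(x)$ and $M_\ell$ be as in the context. Suppose $\mathrm{rank}(M_\ell)=n-1$ for some $\ell\in\{1,\dots,n\}$. Then for $x\in G$, $[a_\ell,x]=1$ if and only if $x=a_\ell^{\alpha_\ell(x)}c(x)$. If, additionally, $\lambda_t^{\ell k}\neq0$ for some $t$ and some $k\neq\ell$, then $Z(G)=\langle C\rangle$ and $a_\ell$ is c-small.
   Context: Commutators: $[g,h]=g^{-1}h^{-1}gh$. A Malcev basis is a pair $(A;C)$ with $C$ a basis of a free abelian subgroup with $G'\le\langle C\rangle\le Z(G)$ and $A$ such that $G/\langle C\rangle$ is free abelian with basis $\{a_i\langle C\rangle\}$. Every $x\in G$ is then uniquely $x=\prod_{i=1}^n a_i^{\alpha_i(x)}c(x)$ with $c(x)=\prod_{j=1}^m c_j^{\gamma_j(x)}$, $\alpha_i(x),\gamma_j(x)\in\mathbb{Z}$. Define integers $\lambda_t^{ij}$ ($1\le i,j\le n$) by $[a_i,a_j]=\prod_{t=1}^m c_t^{\lambda_t^{ij}}$ (so $\lambda_t^{ij}=-\lambda_t^{ji}$, $\lambda_t^{ii}=0$). $M_\ell$ is the $m\times(n-1)$ integer matrix whose $t$-th row is $(-\lambda_t^{1\ell},\dots,-\lambda_t^{\ell-1,\ell},\lambda_t^{\ell,\ell+1},\dots,\lambda_t^{\ell,n})$;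 its rank is its maximal number of linearly independent rows. An element $g$ is c-small if its centralizer equals $\{g^tz\mid t\in\mathbb{Z},z\in Z(G)\}$. *)

From HB Require Import structures.
From mathcomp Require Import all_boot all_order all_algebra.
Set Implicit Arguments. Unset Strict Implicit. Unset Printing Implicit Defensive.
Import GRing.Theory Num.Theory.

Record group := Group {
  gcarrier :> Type;
  gmul : gcarrier -> gcarrier -> gcarrier;
  ginv : gcarrier -> gcarrier;
  gone : gcarrier;
  gmulA : forall x y z, gmul x (gmul y z) = gmul (gmul x y) z;
  gmul1 : forall x, gmul gone x = x;
  gmulV : forall x, gmul (ginv x) x = gone
}.

Section Defs.
Variable G : group.
Local Notation "x * y" := (gmul x y).
Local Notation "x ^-1" := (ginv x).
Local Notation "1" := (gone G).

Definition gpown (g : G) (k : nat) : G := iter k (gmul g) 1.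
Definition gpowz (g : G) (z : int) : G :=
  match z with Posz k => gpown g k | Negz k => (gpown g k.+1)^-1 end.

Definition comm (g h : G) : G := g^-1 * (h^-1 * (g * h)).

Definition central (z : G) : Prop := forall g : G, z * g = g * z.

Inductive gen (S : G -> Prop) : G -> Prop :=
| gen_base x : S x -> gen S x
| gen_one : gen S 1
| gen_mul x y : gen S x -> gen S y -> gen S (x * y)
| gen_inv x : gen S x -> gen S (x^-1).

Definition gprod k (F : 'I_k -> G) : G := \big[@gmul G/1]_(i < k) F i.

Definition finitely_generated : Prop :=
  exists k (f : 'I_k -> G), forall x, gen (fun y => exists i, y = f i) x.

Definition torsion_free : Prop :=
  forall (g : G) (k : nat), (0 < k)%N -> gpown g k = 1 -> g = 1.

Definition two_step_nilpotent : Prop :=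
  (forall x y, central (comm x y)) /\ (exists x y, comm x y <> 1).

Definition range_pred k (c : 'I_k -> G) : G -> Prop := fun y => exists j, y = c j.

Definition subC m (C : 'I_m -> G) : G -> Prop := gen (range_pred C).

Definition free_abelian_basis m (C : 'I_m -> G) : Prop :=
  (forall j j', C j * C j' = C j' * C j) /\
  (forall g : 'I_m -> int, gprod (fun j => gpowz (C j) (g j)) = 1 -> forall j, g j = 0%R).

Definition malcev_basis n m (A : 'I_n -> G) (C : 'I_m -> G) : Prop :=
  [/\ free_abelian_basis C,
      (forall x, gen (fun y => exists g h, y = comm g h) x -> subC C x),
      (forall x, subC C x -> central x),
      (* the cosets a_i<C> span G/<C> (abelian since G' <= <C>) *)
      (forall x, exists al : 'I_n -> int,
          subC C ((gprod (fun i => gpowz (A i) (al i)))^-1 * x)) &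
      (* and are Z-linearly independent in G/<C> *)
      (forall al : 'I_n -> int,
          subC C (gprod (fun i => gpowz (A i) (al i))) -> forall i, al i = 0%R)].

Definition c_small (g : G) : Prop :=
  forall y, y * g = g * y <-> exists (t : int) (z : G), central z /\ y = gpowz g t * z.

End Defs.

(* The matrix M_l (m x (n-1)); column j corresponds to k = lift l j, i.e. the
   indices 1..l-1,l+1..n in order; entry -lam_t^{k l} if k < l, lam_t^{l k} if k > l. *)
Definition Mmat n m (lam : 'I_n -> 'I_n -> 'I_m -> int) (l : 'I_n) : 'M[int]_(m, n.-1) :=
  \matrix_(t < m, j < n.-1)
    let k := lift l j in
    if (k < l)%N then (- lam k l t)%R else lam l k t.

Definition int_rank m p (M : 'M[int]_(m, p)) : nat := \rank (map_mx (intr : int -> rat) M).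

From HB Require Import structures.
From mathcomp Require Import all_boot all_order all_algebra zify.
Import GRing.Theory Num.Theory.

(* Since commutators are central, [x |-> [a_l, x]] is a homomorphism from [G] into [<C>]; on the
   normal form [x = prod_i a_i^(al_i) c] it takes the value [prod_t c_t^(sum_i al_i lam_t^(l i))].
   As [C] is a free basis, [[a_l, x] = 1] exactly when [(al_k)_(k <> l)] lies in the kernel of
   [M_l], which is trivial when [M_l] has rank [n - 1]. Hence the centraliser of [a_l] is
   [a_l^Z <C>], and a central [z] has the form [a_l^al c]; commuting with an [a_k] such that
   [lam_t^(l k) <> 0] then forces [al = 0], so [Z(G) = <C>]. *)

Set Implicit Arguments.
Unset Strict Implicit.
Unset Printing Implicit Defensive.

Declare Scope grp_scope.
Local Notation "x * y" := (gmul x y) : grp_scope.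
Local Notation "x ^-1" := (ginv x) : grp_scope.
Local Notation "1" := (gone _) : grp_scope.

Section GroupFacts.
Variable G : group.
Implicit Types x y z g h : G.
Local Open Scope grp_scope.

Lemma gmulVr x : x * x^-1 = 1.
Proof.
have idem : (x * x^-1) * (x * x^-1) = x * x^-1.
  by rewrite -gmulA (gmulA x^-1) gmulV gmul1.
by have := congr1 (gmul (x * x^-1)^-1) idem; rewrite gmulA !gmulV gmul1.
Qed.

Lemma gmul1r x : x * 1 = x.
Proof. by rewrite -(gmulV x) gmulA gmulVr gmul1. Qed.

Lemma gmulKg x y : x^-1 * (x * y) = y.
Proof. by rewrite gmulA gmulV gmul1. Qed.

Lemma gmulKVg x y : x * (x^-1 * y) = y.
Proof. by rewrite gmulA gmulVr gmul1. Qed.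

Lemma gmulgI x y z : x * y = x * z -> y = z.
Proof. by move=> eq_xy_xz; rewrite -(gmulKg x y) eq_xy_xz gmulKg. Qed.

Lemma gmulIg x y z : y * x = z * x -> y = z.
Proof.
by move=> eq_yx_zx; rewrite -(gmul1r y) -(gmulVr x) gmulA eq_yx_zx -gmulA gmulVr gmul1r.
Qed.

Lemma ginv_uniq x y : x * y = 1 -> x^-1 = y.
Proof. by move=> xy1; apply: (@gmulgI x); rewrite gmulVr xy1. Qed.

Lemma ginvK x : x^-1^-1 = x.
Proof. by apply: ginv_uniq; rewrite gmulV. Qed.

Lemma ginvM x y : (x * y)^-1 = y^-1 * x^-1.
Proof. by apply: ginv_uniq; rewrite -gmulA gmulKVg gmulVr. Qed.

Lemma central1 : central (gone G).
Proof. by move=> g; rewrite gmul1 gmul1r. Qed.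

Lemma central_mul x y : central x -> central y -> central (x * y).
Proof. by move=> cx cy g; rewrite -gmulA cy gmulA cx gmulA. Qed.

Lemma central_inv x : central x -> central x^-1.
Proof.
move=> cx g; apply: (@gmulgI x).
by rewrite gmulKVg gmulA cx -gmulA gmulVr gmul1r.
Qed.

Lemma central_gen (S : G -> Prop) x : (forall y, S y -> central y) -> gen S x -> central x.
Proof.
move=> SC; elim=> {x} [y /SC | | y z _ cy _ cz | y _ cy] //.
- exact: central1.
- exact: central_mul.
- exact: central_inv.
Qed.

Lemma comm1P g h : comm g h = 1 <-> g * h = h * g.
Proof.
split=> [gh1 | gh]; last by rewrite /comm gh gmulKg gmulV.
have conj_g : h^-1 * (g * h) = g by rewrite -[RHS]gmul1r -gh1 gmulKVg.
by rewrite -{1}(gmulKVg h (g * h)) conj_g.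
Qed.

Lemma comm_centralr g x : central x -> comm g x = 1.
Proof. by move=> cx; apply/comm1P. Qed.

Lemma ginv_comm g h : (comm g h)^-1 = comm h g.
Proof. by rewrite /comm !ginvM !ginvK !gmulA. Qed.

(* [g^(xy) = (g [g,x])^y = g^y [g,x] = g [g,y] [g,x]], using that [[g,x]] is central. *)
Lemma commMr g x y : (forall a b : G, central (comm a b)) ->
  comm g (x * y) = comm g x * comm g y.
Proof.
move=> comm_central.
have conj_x : x^-1 * (g * x) = g * comm g x by rewrite /comm gmulKVg.
rewrite {1}/comm ginvM -(gmulA y^-1) (gmulA g x y) (gmulA x^-1) conj_x.
move: (comm g x) (comm_central g x) => c cc.
by rewrite -gmulA cc !gmulA -cc /comm !gmulA.
Qed.

End GroupFacts.

Section Powers.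
Variable G : group.
Implicit Types g x : G.
Local Open Scope grp_scope.

Lemma gpownSr g k : gpown g k.+1 = gpown g k * g.
Proof.
elim: k => [|k IHk]; first by rewrite /gpown /= gmul1r gmul1.
by rewrite [LHS]/gpown iterS -/(gpown g k.+1) {1}IHk gmulA.
Qed.

Lemma gpowzSr g (z : int) : gpowz g (z + 1)%R = gpowz g z * g.
Proof.
case: z => [k | [|k]].
- by rewrite -PoszD addn1; apply: gpownSr.
- by rewrite [(_ + 1)%R]/= /= /gpown /= gmul1r gmulV.
- have -> : (Negz k.+1 + 1)%R = Negz k by rewrite !NegzE; lia.
  change ((gpown g k.+1)^-1 = (g * gpown g k.+1)^-1 * g).
  by rewrite ginvM -gmulA gmulV gmul1r.
Qed.

Lemma int_rec_uniq (f h : int -> G) x : f 0%R = h 0%R ->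
  (forall z : int, f (z + 1)%R = f z * x) -> (forall z : int, h (z + 1)%R = h z * x) -> f =1 h.
Proof.
move=> fh0 fS hS.
have pos (k : nat) : f k = h k.
  by elim: k => [//|k IHk]; rewrite -addn1 PoszD fS hS IHk.
have neg (k : nat) : f (- k%:Z)%R = h (- k%:Z)%R.
  elim: k => [|k IHk]; first exact: (pos 0%N).
  apply: (@gmulIg _ x); rewrite -fS -hS.
  by have -> : (- k.+1%:Z + 1)%R = (- k%:Z)%R by lia.
by case=> k; rewrite ?NegzE.
Qed.

Lemma gpowzD g (a b : int) : gpowz g (a + b)%R = gpowz g a * gpowz g b.
Proof.
move: b; apply: (int_rec_uniq (x := g)) => [|z|z].
- by rewrite addr0 /= /gpown /= gmul1r.
- by rewrite addrA gpowzSr.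
- by rewrite gpowzSr gmulA.
Qed.

Lemma gpowzC g (z : int) : gpowz g z * g = g * gpowz g z.
Proof.
move: z; apply: (int_rec_uniq (x := g)) => [|z|z].
- by rewrite /= /gpown /= gmul1 gmul1r.
- by rewrite gpowzSr.
- by rewrite gpowzSr gmulA.
Qed.

Lemma gen_gpowz (S : G -> Prop) g (z : int) : gen S g -> gen S (gpowz g z).
Proof.
move=> Sg; have Spow k : gen S (gpown g k).
  by elim: k => [|k IHk]; [exact: gen_one | rewrite /gpown iterS; apply: gen_mul].
by case: z => k; [exact: Spow | exact/gen_inv/Spow].
Qed.

Lemma central_gpowz g (z : int) : central g -> central (gpowz g z).
Proof. by move=> cg; apply: (@central_gen _ (@central G)) => //; apply/gen_gpowz/gen_base. Qed.

End Powers.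

HB.instance Definition _ (G : group) :=
  Monoid.isLaw.Build G (gone G) (@gmul G) (@gmulA G) (@gmul1 G) (@gmul1r G).

Lemma big_split_central (G : group) (I : Type) (r : seq I) (P : pred I) (F H : I -> G) :
  (forall i, central (H i)) ->
  \big[@gmul G/gone G]_(i <- r | P i) gmul (F i) (H i) =
  gmul (\big[@gmul G/gone G]_(i <- r | P i) F i) (\big[@gmul G/gone G]_(i <- r | P i) H i).
Proof.
move=> centralH; elim: r => [|a r IHr]; first by rewrite !big_nil gmul1.
rewrite !big_cons; case: ifP => // _.
by rewrite IHr -!gmulA; congr gmul; rewrite !gmulA centralH.
Qed.

Definition gprodz (G : group) k (F : 'I_k -> G) (u : 'I_k -> int) : G :=
  gprod (fun i => gpowz (F i) (u i)).

Section ProductsOfPowers.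
Variables (G : group) (k : nat) (F : 'I_k -> G).
Implicit Types u v : 'I_k -> int.
Local Open Scope grp_scope.

Lemma eq_gprodz u v : u =1 v -> gprodz F u = gprodz F v.
Proof. by move=> eq_uv; apply: eq_bigr => i _; rewrite eq_uv. Qed.

Lemma gprodz0 : gprodz F (fun _ => 0%R) = 1.
Proof. exact: big1. Qed.

Lemma gprodz_single u l : (forall i, i != l -> u i = 0%R) -> gprodz F u = gpowz (F l) (u l).
Proof.
move=> u0; rewrite /gprodz /gprod -(big_rmcond _ _ (P := fun i => i == l)) ?big_pred1_eq //.
by move=> i /u0 ->.
Qed.

Lemma gen_gprodz (S : G -> Prop) u : (forall i, gen S (F i)) -> gen S (gprodz F u).
Proof.
move=> SF; apply: (big_ind (gen S)); first exact: gen_one.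
  exact: gen_mul.
by move=> i _; apply/gen_gpowz/SF.
Qed.

Hypothesis centralF : forall i, central (F i).

Lemma gprodzD u v : gprodz F (fun i => u i + v i)%R = gprodz F u * gprodz F v.
Proof.
rewrite -big_split_central => [|i]; first by apply: eq_bigr => i _; rewrite gpowzD.
exact/central_gpowz/centralF.
Qed.

Lemma gprodz_sum (I : Type) (r : seq I) (P : pred I) (w : I -> 'I_k -> int) :
  gprodz F (fun t => \sum_(i <- r | P i) w i t)%R =
  \big[@gmul G/gone G]_(i <- r | P i) gprodz F (w i).
Proof.
elim: r => [|a r IHr].
  by rewrite big_nil -gprodz0; apply: eq_gprodz => t; rewrite big_nil.
rewrite big_cons -IHr; case: ifP => Pa; rewrite -?gprodzD.
all: by apply: eq_gprodz => t; rewrite big_cons Pa.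
Qed.

End ProductsOfPowers.

Section IntegerKernel.
Local Open Scope ring_scope.

Lemma int_rank_kernel0 m p (M : 'M[int]_(m, p)) (v : 'cV[int]_p) :
  int_rank M = p -> M *m v = 0 -> v = 0.
Proof.
move=> rankM Mv0.
have freeMT : row_free (map_mx (intr : int -> rat) M)^T.
  by rewrite /row_free mxrank_tr; apply/eqP.
have vT0 : (map_mx (intr : int -> rat) v)^T = 0.
  by apply: (row_free_inj freeMT); rewrite /= -trmx_mul -map_mxM Mv0 map_mx0 trmx0 mul0mx.
apply/matrixP => i j; have /matrixP/(_ j i) := vT0.
by rewrite !mxE => /eqP; rewrite intr_eq0 => /eqP.
Qed.

Lemma Mmat_antisym n m (lam : 'I_n -> 'I_n -> 'I_m -> int) l :
  (forall i j t, lam j i t = - lam i j t) ->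
  Mmat lam l = \matrix_(t, j) lam l (lift l j) t.
Proof.
move=> lam_anti; apply/matrixP => t j; rewrite !mxE /=.
by case: ifP => _; rewrite // lam_anti opprK.
Qed.

(* [(al (lift l j))_j] is in the kernel of [M_l]: the [i = l] term of the sum vanishes. *)
Lemma Mmat_kernel n m (lam : 'I_n -> 'I_n -> 'I_m -> int) l (al : 'I_n -> int) :
  (forall i j t, lam j i t = - lam i j t) -> int_rank (Mmat lam l) = n.-1 ->
  (forall t, \sum_(i < n) al i * lam l i t = 0) -> forall i, i != l -> al i = 0.
Proof.
move=> lam_anti rankM al_ker i; rewrite eq_sym => /unlift_some[j -> _].
have lam_diag t : lam l l t = 0 by have := lam_anti l l t; lia.
pose v := \col_j al (lift l j).
have : Mmat lam l *m v = 0.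
  apply/matrixP => t z; rewrite [RHS]mxE -(al_ker t) (bigD1_ord l) //=.
  rewrite lam_diag mulr0 add0r (Mmat_antisym l lam_anti) !mxE.
  by apply: eq_bigr => k _; rewrite !mxE mulrC.
by move=> /(int_rank_kernel0 rankM)/matrixP/(_ j 0); rewrite !mxE.
Qed.

End IntegerKernel.

Section MalcevBasis.
Variables (G : group) (n m : nat) (A : 'I_n -> G) (C : 'I_m -> G).
Variable lam : 'I_n -> 'I_n -> 'I_m -> int.
Hypothesis comm_central : forall x y : G, central (comm x y).
Hypothesis malcevAC : malcev_basis A C.
Hypothesis commA : forall i j, comm (A i) (A j) = gprodz C (lam i j).
Local Open Scope grp_scope.

Lemma subC_central x : subC C x -> central x.
Proof. by case: malcevAC => _ _ + _ _; apply. Qed.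

Lemma subC_C t : subC C (C t).
Proof. by apply: gen_base; exists t. Qed.

Lemma central_C t : central (C t).
Proof. exact/subC_central/subC_C. Qed.

Lemma subC_gprodz u : subC C (gprodz C u).
Proof. exact/gen_gprodz/subC_C. Qed.

Lemma gprodzC_eq1 u : gprodz C u = 1 -> forall t, u t = 0%R.
Proof. by case: malcevAC => [[_ free] _ _ _ _]; apply: free. Qed.

Lemma malcev_decomp x : exists al c, subC C c /\ x = gprodz A al * c.
Proof.
case: malcevAC => _ _ _ span _; have [al Cc] := span x.
by exists al, ((gprodz A al)^-1 * x); rewrite gmulKVg.
Qed.

Lemma comm_gpowz i j (z : int) :
  comm (A i) (gpowz (A j) z) = gprodz C (fun t => z * lam i j t)%R.
Proof.
move: z; apply: (int_rec_uniq (x := gprodz C (lam i j))) => [|z|z].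
- rewrite comm_centralr; last exact: central1.
  by rewrite -(gprodz0 C); apply: eq_gprodz => t; rewrite mul0r.
- by rewrite gpowzSr commMr // commA.
- rewrite -gprodzD; last exact: central_C.
  by apply: eq_gprodz => t; rewrite mulrDl mul1r.
Qed.

Lemma comm_gprodz i al :
  comm (A i) (gprodz A al) = gprodz C (fun t => \sum_j al j * lam i j t)%R.
Proof.
rewrite gprodz_sum; last exact: central_C.
rewrite /gprodz /gprod (big_morph (comm (A i)) (fun x y => commMr (A i) x y comm_central)
  (comm_centralr (A i) (@central1 G))).
by apply: eq_bigr => j _; rewrite comm_gpowz.
Qed.

Lemma lam_antisym i j t : lam j i t = (- lam i j t)%R.
Proof.
apply/eqP; rewrite -addr_eq0; apply/eqP; move: t; apply: gprodzC_eq1.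
by rewrite gprodzD; [rewrite -!commA -ginv_comm gmulV | exact: central_C].
Qed.

Lemma comm_normal_form i al c : central c ->
  comm (A i) (gprodz A al * c) = gprodz C (fun t => \sum_j al j * lam i j t)%R.
Proof. by move=> cc; rewrite commMr // (comm_centralr _ cc) gmul1r comm_gprodz. Qed.

Variable l : 'I_n.
Hypothesis rank_Ml : int_rank (Mmat lam l) = n.-1.

Lemma comm_Al_eq1 al c : central c ->
  comm (A l) (gprodz A al * c) = 1 <-> gprodz A al * c = gpowz (A l) (al l) * c.
Proof.
move=> cc; split=> [|->].
  rewrite comm_normal_form // => /gprodzC_eq1 al_ker.
  by rewrite (gprodz_single _ (Mmat_kernel lam_antisym rank_Ml al_ker)).
by rewrite commMr // (comm_centralr _ cc) gmul1r; apply/comm1P; rewrite gpowzC.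
Qed.

Lemma c_small_Al : c_small (A l).
Proof.
move=> y; split=> [yA | [z [c [cc ->]]]].
  have [al [c [Cc yE]]] := malcev_decomp y; have cc := subC_central Cc.
  have /comm1P : A l * y = y * A l by [].
  by rewrite yE comm_Al_eq1 // -yE => ->; exists (al l), c.
by rewrite -gmulA cc gmulA gpowzC -gmulA.
Qed.

Lemma central_iff_subC k t : lam l k t != 0%R -> forall z, central z <-> subC C z.
Proof.
move=> lam_ne0 z; split=> [cz | /subC_central //].
have [al [c [Cc zE]]] := malcev_decomp z; have cc := subC_central Cc.
have zE' : z = gpowz (A l) (al l) * c.
  by rewrite zE -comm_Al_eq1 // -zE comm_centralr.
have := comm_centralr (A k) cz.
rewrite zE' commMr // (comm_centralr _ cc) gmul1r comm_gpowz => /gprodzC_eq1/(_ t)/eqP.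
rewrite lam_antisym mulf_eq0 oppr_eq0 (negPf lam_ne0) orbF => /eqP al_l0.
by rewrite al_l0 gmul1.
Qed.

End MalcevBasis.

Theorem proposition3p7 (G : group) (n m : nat)
  (A : 'I_n -> G) (C : 'I_m -> G) (lam : 'I_n -> 'I_n -> 'I_m -> int) (l : 'I_n) :
  finitely_generated G -> torsion_free G -> two_step_nilpotent G ->
  malcev_basis A C -> (2 <= n)%N -> (1 <= m)%N ->
  (forall i j, comm (A i) (A j) = gprod (fun t => gpowz (C t) (lam i j t))) ->
  int_rank (Mmat lam l) = n.-1 ->
  (forall (x : G) (al : 'I_n -> int) (ga : 'I_m -> int),
      x = gmul (gprod (fun i => gpowz (A i) (al i))) (gprod (fun t => gpowz (C t) (ga t))) ->
      (comm (A l) x = gone G <->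
       x = gmul (gpowz (A l) (al l)) (gprod (fun t => gpowz (C t) (ga t))))) /\
  ((exists (t : 'I_m) (k : 'I_n), k <> l /\ lam l k t <> 0%R) ->
     (forall z : G, central z <-> subC C z) /\ c_small (A l)).
Proof.
move=> _ _ [comm_central _] malcevAC _ _ commA rank_Ml.
split=> [x al ga -> | [t [k [_ /eqP lam_ne0]]]].
  apply: (comm_Al_eq1 comm_central malcevAC commA rank_Ml).
  exact/(subC_central malcevAC)/subC_gprodz.
split; first exact: (central_iff_subC comm_central malcevAC commA rank_Ml lam_ne0).
exact: (c_small_Al comm_central malcevAC commA rank_Ml).
Qed.
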